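(* Let $(L,L_0)$ be a nonlinear primitive Lie superalgebra. Then $L$ is a semisimple Lie superalgebra and $L$ is not the direct sum of two nonzero ideals.
   Context: All Lie superalgebras are finite-dimensional over $\mathbb{C}$. A pair $(L,L_0)$, with $L=L_{\bar 0}\oplus L_{\bar 1}$ a Lie superalgebra and $L_0$ a subalgebra, is called transitive if $L_0$ contains no nonzero ideal of $L$. A transitive pair is nonlinear primitive if (a) $L_0$ is a maximal subalgebra of $L$, and (b) the subspace $L_1=\{x\in L_0 : [x,L]\subset L_0\}$ (the kernel of the isotropy representation of $L_0$ on $L/L_0$) is nonzero. A Lie superalgebra is semisimple if its radical is zero, equivalently if it contains no nonzero abelian ideal. *)

From HB Require Import structures.
From mathcomp Require Import all_boot all_order all_algebra.
From mathcomp Require Import reals complex.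
Set Implicit Arguments. Unset Strict Implicit. Unset Printing Implicit Defensive.
Import Order.TTheory GRing.Theory Num.Theory.
Local Open Scope ring_scope.

(* A finite-dimensional Lie superalgebra L = L_0bar (+) L_1bar over a field F
   is represented by: a finite-dimensional F-vector space V (vectType),
   two subspaces Vev (even part) and Vod (odd part) with V = Vev (+) Vod,
   and a bracket br : V -> V -> V. *)
Section LieSuper.
Variables (F : fieldType) (V : vectType F).
Variables (Vev Vod : {vspace V}) (br : V -> V -> V).

Definition homog (p : bool) (x : V) : bool :=
  x \in (if p then Vod else Vev).

Definition is_lie_superalgebra : Prop :=
  [/\ (directv (Vev + Vod)%VS /\ (Vev + Vod)%VS = fullv),
      (forall (a : F) (x y z : V),
          (br (a *: x + y) z = a *: br x z + br y z) /\
          (br z (a *: x + y) = a *: br z x + br z y)),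
      (forall p q x y, homog p x -> homog q y -> homog (p (+) q) (br x y)),
      (forall p q x y, homog p x -> homog q y ->
          br x y = - ((-1) ^+ (p && q)) *: br y x) &
      (forall p q x y z, homog p x -> homog q y ->
          br x (br y z) = br (br x y) z + ((-1) ^+ (p && q)) *: br y (br x z))].

Definition graded (A : {vspace V}) : Prop :=
  A = (A :&: Vev + A :&: Vod)%VS.

Definition is_subalg (A : {vspace V}) : Prop :=
  graded A /\ forall x y, x \in A -> y \in A -> br x y \in A.

Definition is_ideal (I : {vspace V}) : Prop :=
  graded I /\ forall x y, y \in I -> br x y \in I.

(* [A, B] : span of all brackets [a, b], a in A, b in B
   (by bilinearity, spanned by brackets of basis vectors) *)
Definition brsp (A B : {vspace V}) : {vspace V} :=
  <<[seq br x y | x <- vbasis A, y <- vbasis B]>>%VS.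

Fixpoint derived (k : nat) (I : {vspace V}) : {vspace V} :=
  if k is k'.+1 then brsp (derived k' I) (derived k' I) else I.

Definition solvable (I : {vspace V}) : Prop := exists k, derived k I = 0%VS.

(* radical (the largest solvable ideal) is zero, i.e. every solvable ideal is 0 *)
Definition semisimple : Prop :=
  forall I, is_ideal I -> solvable I -> I = 0%VS.

Definition transitive_pair (L0 : {vspace V}) : Prop :=
  is_subalg L0 /\ forall I, is_ideal I -> (I <= L0)%VS -> I = 0%VS.

Definition maximal_subalg (L0 : {vspace V}) : Prop :=
  [/\ is_subalg L0, L0 != fullv &
      forall A, is_subalg A -> (L0 <= A)%VS -> A = L0 \/ A = fullv].

Definition L1 (L0 : {vspace V}) (x : V) : Prop :=
  x \in L0 /\ forall y, br x y \in L0.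

Definition nonlinear_primitive (L0 : {vspace V}) : Prop :=
  [/\ transitive_pair L0, maximal_subalg L0 &
      exists x, x != 0 /\ L1 L0 x].

Definition direct_sum_of_two_nonzero_ideals : Prop :=
  exists I J : {vspace V},
    [/\ is_ideal I, is_ideal J, I != 0%VS, J != 0%VS &
        (directv (I + J)%VS) /\ ((I + J)%VS = fullv)].

End LieSuper.

From HB Require Import structures.
From mathcomp Require Import all_boot all_order all_algebra.
From mathcomp Require Import reals complex.
Set Implicit Arguments. Unset Strict Implicit. Unset Printing Implicit Defensive.
Import Order.TTheory GRing.Theory Num.Theory.
Local Open Scope ring_scope.

(* Maximality of L0 forces L = L0 + K for every nonzero ideal K.  If moreover
   an ideal K meets L0 trivially, then [L_1, K] lies in K :&: L0 = 0, so
   [L, L_1] = [L0, L_1] lies in L_1 by Jacobi: L_1 is an ideal inside L0,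
   hence zero by transitivity, which contradicts nonlinearity.  On the other
   hand, if a nonzero ideal M centralizes an ideal K, then L = L0 + M makes
   K :&: L0 an ideal, so K :&: L0 = 0.  Thus no nonzero ideal centralizes
   another one; this excludes nonzero abelian ideals (hence solvable ones,
   via the last nonzero term of the derived series) and decompositions
   L = I (+) J, for which [I, J] lies in I :&: J = 0. *)

Section LieSuperalgebra.
Variables (F : fieldType) (V : vectType F).
Variables (Vev Vod : {vspace V}) (br : V -> V -> V).
Hypothesis HL : is_lie_superalgebra Vev Vod br.

Local Notation hom := (homog Vev Vod).
Local Notation graded := (graded Vev Vod).
Local Notation is_ideal := (is_ideal Vev Vod br).

Definition ad x := br x.
Definition adr y := br^~ y.

Fact ad_is_linear x : linear (ad x).
Proof. by case: HL => _ bil _ _ _ a u v; rewrite /ad (bil a u v x).2. Qed.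
Fact adr_is_linear y : linear (adr y).
Proof. by case: HL => _ bil _ _ _ a u v; rewrite /adr (bil a u v y).1. Qed.
HB.instance Definition _ x := GRing.isLinear.Build F V V _ (ad x) (ad_is_linear x).
HB.instance Definition _ y := GRing.isLinear.Build F V V _ (adr y) (adr_is_linear y).

Lemma brDl y : {morph br^~ y : u v / u + v}.
Proof. exact: raddfD (adr y). Qed.
Lemma brDr x : {morph br x : u v / u + v}.
Proof. exact: raddfD (ad x). Qed.
Lemma brZl a x y : br (a *: x) y = a *: br x y.
Proof. by rewrite -[br _ y]/(adr y _) linearZ. Qed.
Lemma brZr a x y : br x (a *: y) = a *: br x y.
Proof. by rewrite -[br x _]/(ad x _) linearZ. Qed.

Lemma br_suml I (r : seq I) (P : pred I) (f : I -> V) y :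
  br (\sum_(i <- r | P i) f i) y = \sum_(i <- r | P i) br (f i) y.
Proof. by rewrite -[br _ y]/(adr y _) raddf_sum. Qed.
Lemma br_sumr I (r : seq I) (P : pred I) (f : I -> V) x :
  br x (\sum_(i <- r | P i) f i) = \sum_(i <- r | P i) br x (f i).
Proof. by rewrite -[br x _]/(ad x _) raddf_sum. Qed.

Lemma homog_br s r x y : hom s x -> hom r y -> hom (s (+) r) (br x y).
Proof. by case: HL => _ _ H _ _; apply: H. Qed.

Lemma br_antisym s r x y : hom s x -> hom r y ->
  br x y = - ((-1) ^+ (s && r)) *: br y x.
Proof. by case: HL => _ _ _ H _; apply: H. Qed.

Lemma br_jacobi s r x y z : hom s x -> hom r y ->
  br x (br y z) = br (br x y) z + ((-1) ^+ (s && r)) *: br y (br x z).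
Proof. by case: HL => _ _ _ _ H; apply: H. Qed.

Lemma homog_decomp x : exists x0 x1, [/\ hom false x0, hom true x1 & x = x0 + x1].
Proof.
case: HL => [[_ full]] _ _ _ _.
have : x \in (Vev + Vod)%VS by rewrite full memvf.
by case/memv_addP=> u Hu [v Hv ->]; exists u, v.
Qed.

Lemma homog_decomp_uniq a0 a1 b0 b1 :
  hom false a0 -> hom true a1 -> hom false b0 -> hom true b1 ->
  a0 + a1 = b0 + b1 -> a0 = b0 /\ a1 = b1.
Proof.
move=> /= ha0 ha1 hb0 hb1 e; case: HL => [[dir _]] _ _ _ _.
have e01 : a0 - b0 = b1 - a1.
  by apply/eqP; rewrite subr_eq addrAC [b1 + b0]addrC -e addrK.
have : a0 - b0 \in (Vev :&: Vod)%VS by rewrite memv_cap memvB //= e01 memvB.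
rewrite (directv_addP dir) memv0 subr_eq0 => /eqP e0; split => //.
by move: e; rewrite e0 => /addrI.
Qed.

Lemma graded_decomp (A : {vspace V}) x : graded A -> x \in A ->
  exists x0 x1, [/\ x0 \in A, x1 \in A, hom false x0, hom true x1 & x = x0 + x1].
Proof.
move=> gA; rewrite {1}gA => /memv_addP[u + [v + ->]].
by rewrite !memv_cap => /andP[uA uE] /andP[vA vO]; exists u, v.
Qed.

Lemma homog_mem_parts (A : {vspace V}) r u :
  hom r u -> u \in A -> u \in (A :&: Vev + A :&: Vod)%VS.
Proof.
case: r => /= hu uA.
  by apply: (subvP (addvSr _ _)); rewrite memv_cap uA.
by apply: (subvP (addvSl _ _)); rewrite memv_cap uA.
Qed.

Lemma graded_of_subv (A : {vspace V}) :
  (A <= A :&: Vev + A :&: Vod)%VS -> graded A.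
Proof. by move=> sA; apply/eqP; rewrite eqEsubv sA subv_add !capvSl. Qed.

Lemma graded_of_decomp (A : {vspace V}) :
  (forall x, x \in A -> exists x0 x1,
     [/\ x0 \in A, x1 \in A, hom false x0, hom true x1 & x = x0 + x1]) ->
  graded A.
Proof.
move=> H; apply: graded_of_subv; apply/subvP => x /H[x0 [x1 [? ? h0 h1 ->]]].
by rewrite memvD // (homog_mem_parts h0, homog_mem_parts h1).
Qed.

Lemma graded_homog_parts (A : {vspace V}) a0 a1 : graded A ->
  hom false a0 -> hom true a1 -> a0 + a1 \in A -> a0 \in A /\ a1 \in A.
Proof.
move=> gA h0 h1 /(graded_decomp gA)[b0 [b1 [? ? hb0 hb1 e]]].
by have [-> ->] := homog_decomp_uniq h0 h1 hb0 hb1 e.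
Qed.

Lemma gradedI (A B : {vspace V}) : graded A -> graded B -> graded (A :&: B)%VS.
Proof.
move=> gA gB; apply: graded_of_decomp => x; rewrite memv_cap => /andP[xA xB].
have [x0 [x1 [a0 a1 h0 h1 e]]] := graded_decomp gA xA.
rewrite e in xB; have [b0 b1] := graded_homog_parts gB h0 h1 xB.
by exists x0, x1; rewrite !memv_cap a0 a1 b0 b1.
Qed.

Lemma gradedD (A B : {vspace V}) : graded A -> graded B -> graded (A + B)%VS.
Proof.
move=> gA gB; apply: graded_of_decomp => x /memv_addP[a aA [b bB ->]].
have [a0 [a1 [? ? ha0 ha1 ->]]] := graded_decomp gA aA.
have [b0 [b1 [? ? hb0 hb1 ->]]] := graded_decomp gB bB.
exists (a0 + b0), (a1 + b1); rewrite addrACA.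
by split; rewrite ?memv_add // /homog memvD.
Qed.

Lemma graded_full : graded fullv.
Proof.
apply: graded_of_decomp => x _; have [x0 [x1 [h0 h1 e]]] := homog_decomp x.
by exists x0, x1; rewrite !memvf.
Qed.

Lemma graded_closed (f : V -> V) (A C : {vspace V}) :
  {morph f : u v / u + v} -> graded A ->
  (forall r x, hom r x -> x \in A -> f x \in C) -> {in A, forall x, f x \in C}.
Proof.
move=> fD gA H x /(graded_decomp gA)[x0 [x1 [x0A x1A h0 h1 ->]]].
by rewrite fD memvD ?(H false x0) ?(H true x1).
Qed.

Lemma graded_closed2 (f : V -> V -> V) (A B C : {vspace V}) :
  (forall y, {morph f^~ y : u v / u + v}) -> (forall x, {morph f x : u v / u + v}) ->
  graded A -> graded B ->
  (forall s r x y, hom s x -> hom r y -> x \in A -> y \in B -> f x y \in C) ->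
  {in A & B, forall x y, f x y \in C}.
Proof.
move=> fDl fDr gA gB H x y xA yB.
apply: (graded_closed (fDl y) gA _ xA) => s x' hx x'A.
apply: (graded_closed (fDr x') gB _ yB) => r y' hy y'B.
exact: H hx hy x'A y'B.
Qed.

Lemma ideal_brl (I : {vspace V}) x y : is_ideal I -> x \in I -> br x y \in I.
Proof.
case=> gI HI xI; apply: (graded_closed2 brDl brDr gI graded_full _ xI (memvf y)).
by move=> s r u v hu hv uI _; rewrite (br_antisym hu hv) memvZ ?HI.
Qed.

Lemma mem_brsp (A B : {vspace V}) x y :
  x \in A -> y \in B -> br x y \in brsp br A B.
Proof.
move=> xA yB; rewrite (coord_vbasis xA) (coord_vbasis yB) br_suml.
apply: rpred_sum => i _; rewrite brZl br_sumr; apply: memvZ.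
apply: rpred_sum => j _; rewrite brZr; apply: memvZ; apply: memv_span.
by apply: allpairs_f; apply: mem_nth; rewrite size_tuple.
Qed.

Lemma brsp_subv (A B C : {vspace V}) :
  {in A & B, forall x y, br x y \in C} -> (brsp br A B <= C)%VS.
Proof.
move=> H; apply/span_subvP => w /allpairsP[[x y] [xA yB ->]] /=.
by apply: H; apply: vbasis_mem.
Qed.

Lemma graded_brsp (A B : {vspace V}) :
  graded A -> graded B -> graded (brsp br A B).
Proof.
move=> gA gB; apply/graded_of_subv/brsp_subv/(graded_closed2 brDl brDr gA gB).
by move=> s r x y hx hy xA yB; apply: homog_mem_parts (homog_br hx hy) _; apply: mem_brsp.
Qed.

Lemma ideal_brsp (D : {vspace V}) : is_ideal D -> is_ideal (brsp br D D).
Proof.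
move=> [gD HD]; split; first exact: graded_brsp.
move=> z w; suff /subvP/(_ w) : (brsp br D D <= linfun (ad z) @^-1: brsp br D D)%VS.
  by rewrite -memv_preim lfunE.
apply: brsp_subv => x y xD yD; rewrite -memv_preim lfunE /ad.
pose f a b := br a (br b y).
have fDl x' : {morph f^~ x' : u v / u + v} by move=> u v; rewrite /f brDl.
have fDr z' : {morph f z' : u v / u + v} by move=> u v; rewrite /f brDl brDr.
apply: (graded_closed2 fDl fDr graded_full gD _ (memvf z) xD) => s r u v hu hv _ vD.
by rewrite /f (br_jacobi y hu hv) memvD ?memvZ ?mem_brsp ?HD.
Qed.

Lemma ideal_derived (I : {vspace V}) k : is_ideal I -> is_ideal (derived br k I).
Proof. by move=> iI; elim: k => [|k IH] //=; apply: ideal_brsp. Qed.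

Lemma semisimple_of_abelian_ideals :
  (forall J, is_ideal J -> brsp br J J = 0%VS -> J = 0%VS) -> semisimple Vev Vod br.
Proof.
move=> abelian0 I iI [k].
elim: k => [|k IH] // /= dk; apply: IH.
exact: abelian0 (ideal_derived k iI) dk.
Qed.

Section NonlinearPrimitive.
Variable L0 : {vspace V}.
Hypothesis NP : nonlinear_primitive Vev Vod br L0.

Lemma graded_L0 : graded L0.
Proof. by case: NP => [[[]]]. Qed.

Lemma br_L0 x y : x \in L0 -> y \in L0 -> br x y \in L0.
Proof. by case: NP => [[[_ H] _]] _ _; apply: H. Qed.

Lemma ideal_subL0 (I : {vspace V}) : is_ideal I -> (I <= L0)%VS -> I = 0%VS.
Proof. by case: NP => [[_ H]] _ _; apply: H. Qed.

Lemma addL0_ideal (K : {vspace V}) : is_ideal K -> K != 0%VS -> (L0 + K)%VS = fullv.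
Proof.
move=> iK nzK; have [gK HK] := iK.
have subK : is_subalg Vev Vod br (L0 + K)%VS.
  split; first exact: gradedD graded_L0 gK.
  move=> x y /memv_addP[a aL [k kK ->]] /memv_addP[b bL [k' kK' ->]].
  rewrite !brDl !brDr -addrA memv_add ?br_L0 //.
  by rewrite !rpredD ?(ideal_brl _ iK kK) ?HK.
case: NP => _ [_ _ maxL0] _; case: (maxL0 _ subK (addvSl _ _)) => // e.
have sKL0 : (K <= L0)%VS by rewrite -e addvSr.
by move: nzK; rewrite (ideal_subL0 iK sKL0) eqxx.
Qed.

Lemma capL0_centralized (K M : {vspace V}) : is_ideal K -> is_ideal M -> M != 0%VS ->
  {in M & K, forall m k, br m k = 0} -> (K :&: L0)%VS = 0%VS.
Proof.
move=> [gK HK] iM nzM MK0; apply: ideal_subL0; last exact: capvSr.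
split=> [|z y]; first exact: gradedI gK graded_L0.
rewrite !memv_cap => /andP[yK yL]; rewrite HK //=.
have : z \in (L0 + M)%VS by rewrite addL0_ideal // memvf.
by case/memv_addP => a aL [m mM ->]; rewrite brDl (MK0 _ _ mM yK) addr0 br_L0.
Qed.

(* [x, L] <= L0 needs only to be checked on a basis of L. *)
Definition L1space : {vspace V} :=
  (L0 :&: \bigcap_(i < \dim {:V}) (linfun (adr (vbasis {:V})`_i) @^-1: L0))%VS.

Lemma L1spaceP x : x \in L1space <-> L1 br L0 x.
Proof.
rewrite memv_cap [X in _ && X]memvE; split.
  case/andP=> xL /subv_bigcapP xC; split=> // y.
  rewrite (coord_vbasis (memvf y)) br_sumr; apply: rpred_sum => i _.
  by rewrite brZr memvZ //; move: (xC i isT); rewrite -memvE -memv_preim lfunE.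
case=> xL H; rewrite xL; apply/subv_bigcapP => i _.
by rewrite -memvE -memv_preim lfunE; apply: H.
Qed.

Lemma graded_L1space : graded L1space.
Proof.
apply: graded_of_decomp => w /L1spaceP[wL wC].
have [w0 [w1 [w0L w1L h0 h1 e]]] := graded_decomp graded_L0 wL.
have homog_parts r u : hom r u -> br w0 u \in L0 /\ br w1 u \in L0.
  move=> hu; have := wC u; rewrite e brDl.
  have := homog_br h0 hu; have := homog_br h1 hu; case: r hu => /= _ h1u h0u.
    by rewrite addrC => /(graded_homog_parts graded_L0 h1u h0u)[].
  exact: graded_homog_parts graded_L0 h0u h1u.
have parts y : br w0 y \in L0 /\ br w1 y \in L0.
  have [y0 [y1 [hy0 hy1 ->]]] := homog_decomp y.
  have [a0 a1] := homog_parts false y0 hy0; have [b0 b1] := homog_parts true y1 hy1.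
  by rewrite !brDr !memvD.
by exists w0, w1; split=> //; apply/L1spaceP; split=> // y; case: (parts y).
Qed.

(* Jacobi rewrites [[u, v], y] as [u, [v, y]] - (+/-) [v, [u, y]], both in L0. *)
Lemma br_L0_L1space s r u v : hom s u -> hom r v ->
  u \in L0 -> v \in L1space -> br u v \in L1space.
Proof.
move=> hu hv uL /L1spaceP[vL vC]; apply/L1spaceP; split=> [|y]; first exact: br_L0.
have e := br_jacobi y hu hv.
rewrite -[br (br u v) y](addrK (((-1) ^+ (s && r)) *: br v (br u y))) -e.
by rewrite memvB ?memvZ ?vC ?(br_L0 uL (vC y)).
Qed.

Lemma L1space_neq0 : L1space != 0%VS.
Proof.
case: NP => _ _ [x [nzx L1x]]; apply: contraNneq nzx => L1_0.
by move/L1spaceP: L1x; rewrite L1_0 memv0.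
Qed.

Lemma ideal_capL0_neq0 (K : {vspace V}) : is_ideal K -> K != 0%VS ->
  (K :&: L0)%VS != 0%VS.
Proof.
move=> iK nzK; apply/negP => /eqP capK0; have [gK HK] := iK.
have L1K0 w k : w \in L1space -> k \in K -> br w k = 0.
  move=> /L1spaceP[_ wC] kK; apply/eqP; rewrite -memv0 -capK0.
  by rewrite memv_cap HK ?wC.
have iL1 : is_ideal L1space.
  split=> [|z w wL1]; first exact: graded_L1space.
  have : z \in (L0 + K)%VS by rewrite addL0_ideal // memvf.
  case/memv_addP => a aL [k kK ->].
  rewrite brDl [br k w](_ : _ = 0) ?addr0.
    apply: (graded_closed2 brDl brDr graded_L0 graded_L1space _ aL wL1).
    by move=> s r u v hu hv uL vL1; apply: br_L0_L1space hu hv uL vL1.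
  apply/eqP; rewrite -memv0.
  apply: (graded_closed2 brDl brDr gK graded_L1space _ kK wL1) => s r u v hu hv uK vL1.
  by rewrite (br_antisym hu hv) L1K0 ?scaler0 ?mem0v.
by move: L1space_neq0; rewrite (ideal_subL0 iL1 (capvSl _ _)) eqxx.
Qed.

Lemma ideals_not_centralized (K M : {vspace V}) : is_ideal K -> is_ideal M ->
  K != 0%VS -> M != 0%VS -> ~ {in M & K, forall m k, br m k = 0}.
Proof.
move=> iK iM nzK nzM MK0.
by move: (ideal_capL0_neq0 iK nzK); rewrite (capL0_centralized iK iM nzM MK0) eqxx.
Qed.

Lemma semisimple_of_nonlinear_primitive : semisimple Vev Vod br.
Proof.
apply: semisimple_of_abelian_ideals => J iJ JJ0.
have [//|nzJ] := eqVneq J 0%VS; case: (ideals_not_centralized iJ iJ nzJ nzJ).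
by move=> m k mJ kJ; apply/eqP; rewrite -memv0 -JJ0 mem_brsp.
Qed.

Lemma not_direct_sum_of_ideals : ~ direct_sum_of_two_nonzero_ideals Vev Vod br.
Proof.
case=> I [J [iI iJ nzI nzJ [dIJ _]]]; apply: (ideals_not_centralized iI iJ nzI nzJ).
move=> m k mJ kI; apply/eqP; rewrite -memv0 -(directv_addP dIJ).
by rewrite memv_cap iI.2 // ideal_brl.
Qed.

End NonlinearPrimitive.
End LieSuperalgebra.

Local Open Scope complex_scope.

Theorem corollary2p2 (R : realType) (V : vectType R[i])
    (Vev Vod : {vspace V}) (br : V -> V -> V) (L0 : {vspace V}) :
  is_lie_superalgebra Vev Vod br ->
  nonlinear_primitive Vev Vod br L0 ->
  semisimple Vev Vod br /\ ~ direct_sum_of_two_nonzero_ideals Vev Vod br.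
Proof.
move=> HL NP; split.
- exact: (semisimple_of_nonlinear_primitive HL NP).
- exact: (not_direct_sum_of_ideals HL NP).
Qed.
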